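(* Let $D = (D_{ij})$ be an $m \times m$ matrix of differences and let $G_n$ be the $m$-block circulant graph on $nm$ vertices with matrix of differences $D$. Setting $\alpha_n = \alpha(G_n)/(nm)$, we have $\lim_{n\to\infty} \alpha_n = \sup_n \alpha_n$.
   Context: An $m\times m$ matrix of differences is a matrix $D=(D_{ij})$ of finite subsets of $\mathbb{Z}$ with $D_{ji} = -D_{ij}$. $G_n$ has vertex set $\{(i,u) : 0 \leq i \leq m-1,\ 0\leq u \leq n-1\}$, and $(i,u)$, $(j,v)$ (possibly equal) are adjacent iff $v-u$ is congruent modulo $n$ to some element of $D_{ij}$. $\alpha(G)$ is the maximum size of an independent set (no two adjacent vertices, no vertex with a loop). *)

From HB Require Import structures.
From mathcomp Require Import all_boot all_order all_algebra.
From mathcomp Require Import all_classical all_reals all_analysis.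
Set Implicit Arguments. Unset Strict Implicit. Unset Printing Implicit Defensive.
Import Order.TTheory GRing.Theory Num.Theory.
Local Open Scope ring_scope.

Definition diff_matrix (m : nat) := 'I_m -> 'I_m -> seq int.

Definition is_diff_matrix (m : nat) (D : diff_matrix m) : Prop :=
  forall (i j : 'I_m) (x : int), (x \in D j i) = (- x \in D i j).

Definition circ_adj (m n : nat) (D : diff_matrix m)
    (x y : 'I_m * 'I_n) : bool :=
  has (fun d : int => (n%:Z %| ((y.2 : nat)%:Z - (x.2 : nat)%:Z - d))%Z) (D x.1 y.1).

(* independent set: no two (possibly equal) vertices adjacent; in particular no loops *)
Definition independent (m n : nat) (D : diff_matrix m)
    (S : {set 'I_m * 'I_n}) : bool :=
  [forall x in S, forall y in S, ~~ circ_adj D x y].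

Definition alpha (m n : nat) (D : diff_matrix m) : nat :=
  \max_(S : {set 'I_m * 'I_n} | independent D S) #|S|.

Definition alpha_norm (R : realType) (m : nat) (D : diff_matrix m) (n : nat) : R :=
  ((alpha n D)%:R / (n * m)%:R)%R.

From HB Require Import structures.
From mathcomp Require Import all_boot all_order all_algebra.
From mathcomp Require Import all_classical all_reals all_analysis.
From mathcomp Require Import zify ring lra.
Set Implicit Arguments. Unset Strict Implicit. Unset Printing Implicit Defensive.
Import Order.TTheory GRing.Theory Num.Theory numFieldNormedType.Exports.
Local Open Scope classical_set_scope.
Local Open Scope ring_scope.

(** The idea: let [c] exceed every [|d|] with [d] in some [D i j]. Placing
    [q = (N - c) / n] translated copies of a maximum independent set of [G_n]
    at offsets [0, n, ..., (q - 1) n] of [Z_N] gives an independent set of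
    [G_N]: all positions lie in [[0, N - c)], so a congruence modulo [N]
    between two of them and some [d] is an equality in [Z], which then also
    holds modulo [n]. Hence [alpha_N >= alpha_n - (n + c) / N] for all [n] and
    [N], and a bounded sequence with such lower bounds converges to its
    supremum. *)

Lemma cvg_sup_of_lower_bounds (R : realType) (a : R ^nat) (C : nat -> R) :
  has_ubound (range a) -> (forall n N, a n - C n / N.+1%:R <= a N) ->
  a @ \oo --> sup (range a).
Proof.
move=> a_ub a_lower.
have a_sup : has_sup (range a) by split=> //; exists (a 0%N), 0%N.
apply/cvgrPdist_lt => e e_gt0; have e2_gt0 : 0 < e / 2 by rewrite divr_gt0.
have [_ [n _ <-] a_n_gt] := sup_adherent e2_gt0 a_sup.
have : C n * harmonic N @[N --> \oo] --> 0.
  by rewrite -(mulr0 (C n)); apply: cvgMl_tmp; exact: cvg_harmonic.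
move=> /cvgrPdist_lt /(_ _ e2_gt0); apply: filterS => N.
rewrite sub0r normrN /= => /(le_lt_trans (ler_norm _)) err_lt.
have a_N_le : a N <= sup (range a) by apply: sup_upper_bound => //; exists N.
have := a_lower n N; rewrite ger0_norm ?subr_ge0 //.
by move: err_lt a_n_gt a_N_le; move: (C n / _) => err; lra.
Qed.

Lemma independentP m n (D : diff_matrix m) (S : {set 'I_m * 'I_n}) :
  reflect (forall x y, x \in S -> y \in S -> ~~ circ_adj D x y) (independent D S).
Proof.
apply: (iffP forallP) => [S_indep x y xS yS | S_indep x].
  by move/implyP: (S_indep x) => /(_ xS) /forallP /(_ y) /implyP; apply.
by apply/implyP => xS; apply/forallP => y; apply/implyP; exact: S_indep.
Qed.

Lemma alpha_attained m n (D : diff_matrix m) :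
  exists2 S : {set 'I_m * 'I_n}, independent D S & alpha n D = #|S|.
Proof.
have indep_exists : (0 < #|[pred S : {set 'I_m * 'I_n} | independent D S]|)%N.
  apply/card_gt0P; exists finset.set0.
  by rewrite inE; apply/independentP => x y; rewrite inE.
have [S S_indep alpha_eq] := eq_bigmax_cond (fun S : {set _} => #|S|) indep_exists.
by exists S; [move: S_indep; rewrite inE | exact: alpha_eq].
Qed.

Lemma alpha_le_order m n (D : diff_matrix m) : (alpha n D <= m * n)%N.
Proof.
by apply/bigmax_leqP => S _; have := max_card (mem S); rewrite card_prod !card_ord.
Qed.

Definition diff_bound m (D : diff_matrix m) : nat :=
  (\max_(i : 'I_m) \max_(j : 'I_m) \max_(d <- D i j) `|d|%N).+1.

Lemma diff_bound_gt m (D : diff_matrix m) i j d :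
  d \in D i j -> (`|d| < diff_bound D)%N.
Proof.
move=> d_in; rewrite ltnS; apply: leq_trans (leq_bigmax i).
by apply: leq_trans (leq_bigmax j); exact: leq_bigmax_seq.
Qed.

Lemma dvdz_small_eq0 (N : nat) (x : int) :
  (N%:Z %| x)%Z -> (`|x| < N)%N -> x = 0.
Proof.
rewrite dvdzE /= => N_dvd x_lt; apply/eqP; rewrite -absz_eq0.
by apply: contraTT x_lt; rewrite -lt0n -leqNgt => /dvdn_leq; apply.
Qed.

Section Tiling.

Variables (m : nat) (D : diff_matrix m) (c n N q : nat).
Hypotheses (diff_lt : forall i j d, d \in D i j -> (`|d| < c)%N)
           (tiles_fit : (q * n <= N - c)%N).

Lemma tile_pos_lt (t : 'I_q) (u : 'I_n) : (t * n + u + c < N)%N.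
Proof.
have : (t.+1 * n <= q * n)%N by rewrite leq_mul2r ltn_ord orbT.
by rewrite mulSn; have := ltn_ord u; lia.
Qed.

Definition tile_vertex (p : 'I_q * ('I_m * 'I_n)) : 'I_m * 'I_N :=
  (p.2.1, Ordinal (leq_ltn_trans (leq_addr c _) (tile_pos_lt p.1 p.2.2))).

Lemma tile_vertex_inj : injective tile_vertex.
Proof.
move=> [t [i u]] [s [j v]] [-> pos_eq].
have n_gt0 : (0 < n)%N by apply: leq_ltn_trans (ltn_ord u).
have := congr1 (divn^~ n) pos_eq; rewrite !divnMDl // !divn_small // !addn0.
have := congr1 (modn^~ n) pos_eq; rewrite !modnMDl !modn_small //.
by move=> /val_inj -> /val_inj ->.
Qed.

Lemma tile_vertex_adj x y :
  circ_adj D (tile_vertex x) (tile_vertex y) -> circ_adj D x.2 y.2.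
Proof.
case: x y => [t [i u]] [s [j v]]; rewrite /circ_adj /= => /hasP [d d_in N_dvd].
apply/hasP; exists d => //=.
have diff_eq0 : (s * n + v)%:Z - (t * n + u)%:Z - d = 0.
  apply: dvdz_small_eq0 N_dvd _.
  have := diff_lt d_in; have := tile_pos_lt t u; have := tile_pos_lt s v; lia.
have -> : v%:Z - u%:Z - d = (t%:Z - s%:Z) * n%:Z by move: diff_eq0; nia.
exact: dvdz_mull.
Qed.

Definition tile (S : {set 'I_m * 'I_n}) : {set 'I_m * 'I_N} :=
  tile_vertex @: finset.setX [set: 'I_q] S.

Lemma card_tile S : #|tile S| = (q * #|S|)%N.
Proof. by rewrite card_imset ?cardsX ?cardsT ?card_ord //; exact: tile_vertex_inj. Qed.

Lemma tile_independent S : independent D S -> independent D (tile S).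
Proof.
move/independentP => S_indep; apply/independentP.
move=> _ _ /imsetP [[t x] + ->] /imsetP [[s y] + ->].
rewrite !finset.in_setX => /andP [_ xS] /andP [_ yS].
by apply: contra (S_indep _ _ xS yS); exact: tile_vertex_adj.
Qed.

Lemma alpha_tile : (q * alpha n D <= alpha N D)%N.
Proof.
have [S S_indep ->] := alpha_attained n D.
by rewrite -card_tile; apply: leq_bigmax_cond; exact: tile_independent.
Qed.

End Tiling.

Lemma alpha_norm_lower (R : realType) m (D : diff_matrix m) c n N :
  (0 < m)%N -> (forall i j d, d \in D i j -> (`|d| < c)%N) ->
  alpha_norm R D n.+1 - (c + n.+1)%:R / N.+1%:R <= alpha_norm R D N.+1.
Proof.
move=> m_gt0 diff_lt; set q := ((N.+1 - c) %/ n.+1)%N.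
have tiled := alpha_tile diff_lt (leq_divM (N.+1 - c) n.+1).
have N_le : (N.+1 <= q.+1 * n.+1 + c)%N.
  by have := ltn_ceil (N.+1 - c) (ltn0Sn n); lia.
have bound : (alpha n.+1 D * N.+1 <= alpha N.+1 D * n.+1 + (c + n.+1) * n.+1 * m)%N.
  by have := alpha_le_order n.+1 D; nia.
rewrite /alpha_norm lerBlDr !natrM !natrD.
move: bound; rewrite -(ler_nat R) !(natrD, natrM).
set a := (alpha n.+1 D)%:R; set b := (alpha N.+1 D)%:R.
set nr := n.+1%:R; set Nr := N.+1%:R; set mr := m%:R => cross.
have [nr_gt0 Nr_gt0 mr_gt0] : [/\ 0 < nr, 0 < Nr & 0 < mr :> R] by rewrite !ltr0n.
rewrite ler_pdivrMr ?mulr_gt0 //.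
have -> : (b / (Nr * mr) + (c%:R + nr) / Nr) * (nr * mr)
          = (b * nr + (c%:R + nr) * nr * mr) / Nr.
  by field; rewrite !gt_eqF.
by rewrite ler_pdivlMr.
Qed.

Theorem theorem8 (R : realType) (m : nat) (D : diff_matrix m) :
  (0 < m)%N -> is_diff_matrix D ->
  alpha_norm R D k.+1 @[k --> \oo] -->
    sup (range (fun k : nat => alpha_norm R D k.+1)).
Proof.
move=> m_gt0 _.
apply: (@cvg_sup_of_lower_bounds _ _ (fun n => (diff_bound D + n.+1)%:R)).
  exists 1 => _ [k _ <-].
  rewrite /alpha_norm ler_pdivrMr ?ltr0n ?muln_gt0 ?m_gt0 // mul1r ler_nat mulnC.
  exact: alpha_le_order.
by move=> n N; apply: alpha_norm_lower m_gt0 _ => i j d; exact: diff_bound_gt.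
Qed.
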